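(* Let $P$ be a poset, let $\mathbf{JF}_P$ be the set of frame-generating join-specifications for $P$ and $\mathbf{JF}^+_P$ the set of maximal frame-generating join-specifications for $P$, both ordered by inclusion. (1) $\mathbf{JF}_P$ is a complete lattice (equivalently, as a thin category it is complete and cocomplete). Non-empty joins are given by unions, the top element is $\bigcup_{\mathcal{U}\in\mathbf{JF}_P}\mathcal{U}$ and the bottom element is $B_P$. (2) $\mathbf{JF}^+_P$ is a complete lattice (equivalently, complete and cocomplete). Non-empty meets are given by intersections, the top element is $\bigcup_{\mathcal{U}\in\mathbf{JF}_P}\mathcal{U}$ and the bottom element is $B_P^+$.
   Context: A join-specification for $P$ is a set $\mathcal{U}\subseteq\wp(P)$ such that $\bigvee S$ exists in $P$ for every $S\in\mathcal{U}$, and $\{p\}\in\mathcal{U}$ for every $p\in P$. A $\mathcal{U}$-ideal is a down-closed $C\subseteq P$ such that $\bigvee S\in C$ whenever $S\in\mathcal{U}$, $S\subseteq C$. $\mathcal{I}_{\mathcal{U}}$ is the complete lattice of $\mathcal{U}$-ideals ordered by inclusion; $\Gamma_{\mathcal{U}}(S)$ is the smallest $\mathcal{U}$-ideal containing $S$. $\mathcal{U}^+=\{S\subseteq P:\bigvee S\text{ exists and }\bigvee S\in\Gamma_{\mathcal{U}}(S)\}$; $\mathcal{U}$ is maximal if $\mathcal{U}=\mathcal{U}^+$; $\mathcal{U}$ is frame-generating if $\mathcal{I}_{\mathcal{U}}$ is a frame. $B_P$ is the set of all singleton subsets of $P$, and $B_P^+=(B_P)^+$. *)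

From HB Require Import structures.
From mathcomp Require Import all_boot all_order.
From mathcomp Require Import boolp classical_sets.
Set Implicit Arguments. Unset Strict Implicit. Unset Printing Implicit Defensive.
Import Order.TTheory.
Local Open Scope classical_set_scope.
Local Open Scope order_scope.

Section GenericOrder.
Variables (X : Type) (le : X -> X -> Prop) (D : set X).

Definition is_lub_in (F : set X) (x : X) : Prop :=
  D x /\ (forall y, F y -> le y x) /\
  (forall z, D z -> (forall y, F y -> le y z) -> le x z).

Definition is_glb_in (F : set X) (x : X) : Prop :=
  D x /\ (forall y, F y -> le x y) /\
  (forall z, D z -> (forall y, F y -> le z y) -> le z x).

Definition complete_lattice_in : Prop :=
  (forall F, F `<=` D -> exists x, is_lub_in F x) /\
  (forall F, F `<=` D -> exists x, is_glb_in F x).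

(* (D, le) is a frame: a complete lattice in which binary meets distribute
   over arbitrary joins:  a /\ (\/ F) = \/ { a /\ f | f in F }. *)
Definition frame_in : Prop :=
  complete_lattice_in /\
  (forall a F, D a -> F `<=` D ->
     forall j, is_lub_in F j ->
     forall m, is_glb_in [set y | y = a \/ y = j] m ->
     is_lub_in [set x | exists2 f, F f & is_glb_in [set y | y = a \/ y = f] x] m).

Definition is_top_in (x : X) : Prop := D x /\ forall y, D y -> le y x.
Definition is_bot_in (x : X) : Prop := D x /\ forall y, D y -> le x y.
End GenericOrder.

Section JoinSpec.
Context {disp : Order.disp_t} {P : porderType disp}.

Definition is_ub (S : set P) (x : P) : Prop := forall y, S y -> y <= x.
Definition is_join (S : set P) (x : P) : Prop :=
  is_ub S x /\ forall z, is_ub S z -> x <= z.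

Definition join_spec (U : set (set P)) : Prop :=
  (forall S, U S -> exists x, is_join S x) /\ (forall p : P, U [set p]).

Definition U_ideal (U : set (set P)) (C : set P) : Prop :=
  (forall x y : P, x <= y -> C y -> C x) /\
  (forall S, U S -> S `<=` C -> forall x, is_join S x -> C x).

Definition Gamma (U : set (set P)) (S : set P) : set P :=
  [set x | forall C, U_ideal U C -> S `<=` C -> C x].

Definition Uplus (U : set (set P)) : set (set P) :=
  [set S | exists x, is_join S x /\ Gamma U S x].

Definition maximal_js (U : set (set P)) : Prop := U = Uplus U.

Definition frame_generating (U : set (set P)) : Prop :=
  frame_in (fun A B : set P => A `<=` B) (U_ideal U).

Definition B_P : set (set P) := [set S | exists p : P, S = [set p]].
Definition B_P_plus : set (set P) := Uplus B_P.

Definition JF : set (set (set P)) := [set U | join_spec U /\ frame_generating U].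
Definition JFplus : set (set (set P)) := [set U | JF U /\ maximal_js U].
End JoinSpec.

From HB Require Import structures.
From mathcomp Require Import all_boot all_order.
From mathcomp Require Import boolp classical_sets.
Local Open Scope classical_set_scope.
Import Order.TTheory.

Set Implicit Arguments.
Unset Strict Implicit.
Unset Printing Implicit Defensive.

(* A join-specification U generates a frame iff, for S in U and x <= \/S,
   x lies in the U-ideal generated by downmeet x S = {w | w <= x, w <= s for
   some s in S}: the law x /\ \/S = \/(x /\ s) read in the U-ideals.  As
   Gamma_U grows with U, this condition survives enlarging U, so nonempty
   unions of frame-generating join-specifications are frame-generating, and
   with the bottom B_P this makes JF_P complete.  U and U^+ have the same
   ideals, so U^+ is frame-generating too.  For frame-generating U, the set
   downmeet x S has join x and lies in U^+, hence in U when U is maximal; so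
   it lies in any intersection of maximal ones, which is therefore again
   frame-generating, and maximal because U |-> U^+ is monotone. *)

Section CompleteLattice.
Variables (X : Type) (le : X -> X -> Prop) (D : set X).

Lemma complete_lattice_in_lub :
  (forall F, F `<=` D -> exists x, is_lub_in le D F x) ->
  complete_lattice_in le D.
Proof.
move=> lubs; split=> // F FD.
have [l [Dl [ubl leastl]]] :=
  lubs [set x | D x /\ forall y, F y -> le x y]
    (fun x (h : D x /\ _) => proj1 h).
exists l; split=> //; split; last by move=> z Dz zF; exact: ubl.
by move=> y Fy; apply: leastl => [|x [_]]; [exact: FD | exact].
Qed.

Lemma is_lub_in_set0 b : is_bot_in le D b -> is_lub_in le D set0 b.
Proof. by move=> [Db botb]; do 2!split=> //; move=> z Dz _; exact: botb. Qed.

Lemma complete_lattice_in_bot b : is_bot_in le D b ->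
  (forall F, F `<=` D -> F !=set0 -> exists x, is_lub_in le D F x) ->
  complete_lattice_in le D.
Proof.
move=> botb lubs; apply: complete_lattice_in_lub => F FD.
have [->|/set0P F0] := eqVneq F set0; last exact: lubs.
by exists b; exact: is_lub_in_set0.
Qed.

Lemma complete_lattice_in_dual :
  complete_lattice_in (fun x y => le y x) D -> complete_lattice_in le D.
Proof. by move=> [glbs lubs]; split; [exact: lubs | exact: glbs]. Qed.

End CompleteLattice.

Lemma complete_lattice_in_top (X : Type) (le : X -> X -> Prop) (D : set X) t :
  is_top_in le D t ->
  (forall F, F `<=` D -> F !=set0 -> exists x, is_glb_in le D F x) ->
  complete_lattice_in le D.
Proof.
move=> topt glbs; apply: complete_lattice_in_dual.
exact: complete_lattice_in_bot topt glbs.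
Qed.

Section PowersetOrder.
Variables (T : Type) (D F : set (set T)).

Lemma is_lub_in_bigcup :
  D (\bigcup_(A in F) A) -> is_lub_in subset D F (\bigcup_(A in F) A).
Proof.
move=> DF; split=> //; split=> [A FA|Z _ Zub t [A FA At]]; first exact: bigcup_sup.
exact: Zub A FA t At.
Qed.

Lemma is_glb_in_bigcap :
  D (\bigcap_(A in F) A) -> is_glb_in subset D F (\bigcap_(A in F) A).
Proof.
move=> DF; split=> //; split=> [A FA|Z _ Zlb t Zt A FA]; first exact: bigcap_inf.
exact: Zlb A FA t Zt.
Qed.

End PowersetOrder.

Section JoinSpecifications.
Context {disp : Order.disp_t} {P : porderType disp}.
Local Open Scope order_scope.
Implicit Types (U V : set (set P)) (A B C S T : set P) (x y z : P).

Lemma is_join_unique S x y : is_join S x -> is_join S y -> x = y.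
Proof.
by move=> [ubx leastx] [uby leasty]; apply/le_anti; rewrite leastx ?leasty.
Qed.

Lemma is_join1 x : is_join [set x] x.
Proof. by split=> [_ ->|z]; [exact: lexx | apply]. Qed.

Lemma U_ideal_down U z : U_ideal U [set w | w <= z].
Proof.
split=> [x y xy /= yz|T _ Tz x [_ leastx]]; first exact: le_trans xy yz.
exact: leastx.
Qed.

Lemma U_ideal_setI U A B : U_ideal U A -> U_ideal U B -> U_ideal U (A `&` B).
Proof.
move=> [downA joinA] [downB joinB]; split=> [x y xy [Ay By]|T UT TAB x jx].
  by split; [exact: downA xy Ay | exact: downB xy By].
by split; [apply: joinA UT _ x jx | apply: joinB UT _ x jx] => t /TAB[].
Qed.

Lemma U_ideal_bigcap U F : F `<=` U_ideal U -> U_ideal U (\bigcap_(A in F) A).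
Proof.
move=> FI; split=> [x y xy Fy A FA|T UT TF x jx A FA].
  exact: (FI A FA).1 x y xy (Fy A FA).
by apply: (FI A FA).2 UT _ x jx => t /TF; apply.
Qed.

Lemma U_ideal_subU U V C : U `<=` V -> U_ideal V C -> U_ideal U C.
Proof. by move=> UV [downC joinC]; split=> // T /UV; exact: joinC. Qed.

Lemma U_ideal_Gamma U S : U_ideal U (Gamma U S).
Proof.
split=> [x y xy Gy C CI SC|T UT TG x jx C CI SC].
  exact: CI.1 x y xy (Gy C CI SC).
by apply: CI.2 UT _ x jx => t /TG; apply.
Qed.

Lemma sub_Gamma U S : S `<=` Gamma U S.
Proof. by move=> x Sx C _; apply. Qed.

Lemma Gamma_subU U V S : U `<=` V -> Gamma U S `<=` Gamma V S.
Proof. by move=> UV x Gx C CI; apply: Gx; exact: U_ideal_subU CI. Qed.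

Lemma Gamma_join U T x : U T -> is_join T x -> Gamma U T x.
Proof. by move=> UT; exact: (U_ideal_Gamma U T).2 T UT (@sub_Gamma U T) x. Qed.

Lemma is_join_Gamma U T x : is_ub T x -> Gamma U T x -> is_join T x.
Proof.
by move=> ubx Gx; split=> // z ubz; exact: (Gx _ (U_ideal_down U z) ubz).
Qed.

Lemma is_lub_in_Gamma U F :
  is_lub_in subset (U_ideal U) F (Gamma U (\bigcup_(A in F) A)).
Proof.
split; first exact: U_ideal_Gamma.
split=> [A FA x Ax|Z ZI Zub x Gx]; first by apply: sub_Gamma; exists A.
by apply: (Gx Z ZI) => t [A FA At]; exact: Zub A FA t At.
Qed.

Lemma is_glb_in_setI U A B : U_ideal U A -> U_ideal U B ->
  is_glb_in subset (U_ideal U) [set Y | Y = A \/ Y = B] (A `&` B).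
Proof.
move=> AI BI; split; first exact: U_ideal_setI.
split=> [_ [->|->] x []|Z _ Zlb x Zx] //.
split; first exact: Zlb A (or_introl erefl) x Zx.
exact: Zlb B (or_intror erefl) x Zx.
Qed.

Lemma complete_lattice_U_ideal U : complete_lattice_in subset (U_ideal U).
Proof.
split=> F FI.
  by exists (Gamma U (\bigcup_(A in F) A)); exact: is_lub_in_Gamma.
by exists (\bigcap_(A in F) A); apply: is_glb_in_bigcap; exact: U_ideal_bigcap.
Qed.

Definition downmeet x S : set P := [set w | w <= x /\ exists2 s, S s & w <= s].

Definition distributive_js U : Prop :=
  forall S, U S -> forall y, is_join S y -> forall x, x <= y ->
    Gamma U (downmeet x S) x.

Lemma frame_generating_distributive U :
  frame_generating U -> distributive_js U.
Proof.
move=> [_ frame_law] S US y jy x xy.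
set F := [set [set w | w <= s] | s in S].
set J := Gamma U (\bigcup_(A in F) A).
have FI : F `<=` U_ideal U by move=> _ [s _ <-]; exact: U_ideal_down.
have SJ : S `<=` J.
  move=> s Ss; apply: sub_Gamma.
  by exists [set w | w <= s]; [exists s | exact: lexx].
have Jy : J y := (U_ideal_Gamma U _).2 S US SJ y jy.
have [_ [_ least]] := frame_law _ F (U_ideal_down U x) FI J
  (is_lub_in_Gamma U F) _ (is_glb_in_setI (U_ideal_down U x) (U_ideal_Gamma U _)).
apply: (least _ (U_ideal_Gamma U _)); last first.
  by split; [exact: lexx | exact: (U_ideal_Gamma U _).1 x y xy Jy].
move=> G [_ [s Ss <-] [_ [Glb _]]] w Gw; apply: sub_Gamma.
split; first exact: Glb _ (or_introl erefl) w Gw.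
by exists s => //; exact: Glb _ (or_intror erefl) w Gw.
Qed.

(* The Heyting implication A => Z of the frame of U-ideals. *)
Lemma U_ideal_impl U A Z : distributive_js U -> U_ideal U A -> U_ideal U Z ->
  U_ideal U [set y | forall x, A x -> x <= y -> Z x].
Proof.
move=> dU AI ZI; split=> [y' y y'y Ky x Ax xy'|T UT TK y jy x Ax xy].
  exact: Ky x Ax (le_trans xy' y'y).
apply: (dU T UT y jy x xy Z ZI) => w [wx [t Tt wt]].
exact: TK t Tt w (AI.1 w x wx Ax) wt.
Qed.

Lemma distributive_frame_generating U :
  distributive_js U -> frame_generating U.
Proof.
move=> dU; split; first exact: complete_lattice_U_ideal.
move=> A F AI FI J [JI [Jub Jleast]] M [MI [Mlb Mgreatest]].
split=> //; split.
  move=> G [f Ff [GI [Glb _]]]; apply: Mgreatest => // _ [->|->].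
    exact: Glb (or_introl erefl).
  exact: subset_trans (Glb f (or_intror erefl)) (Jub f Ff).
move=> Z ZI Zub.
have AfZ f : F f -> A `&` f `<=` Z.
  by move=> Ff; apply: Zub; exists f => //; exact: is_glb_in_setI AI (FI f Ff).
have JK : J `<=` [set y | forall x, A x -> x <= y -> Z x].
  apply: Jleast; first exact: U_ideal_impl.
  move=> f Ff y fy x Ax xy; apply: (AfZ f Ff x).
  by split=> //; exact: (FI f Ff).1 x y xy fy.
move=> t Mt; apply: (JK t _ t _ (lexx t)).
  exact: Mlb J (or_intror erefl) t Mt.
exact: Mlb A (or_introl erefl) t Mt.
Qed.

Lemma frame_generatingP U : frame_generating U <-> distributive_js U.
Proof.
split; first exact: frame_generating_distributive.
exact: distributive_frame_generating.
Qed.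

Lemma is_join_downmeet U S y x : distributive_js U -> U S -> is_join S y ->
  x <= y -> is_join (downmeet x S) x.
Proof.
by move=> dU US jy xy; apply: is_join_Gamma (dU S US y jy x xy) => w [].
Qed.

Lemma sub_Uplus U : join_spec U -> U `<=` Uplus U.
Proof.
move=> [joins _] S US; have [x jx] := joins S US.
by exists x; split=> //; exact: Gamma_join.
Qed.

Lemma U_ideal_Uplus U : join_spec U -> U_ideal (Uplus U) = U_ideal U.
Proof.
move=> jsU; apply/funext => C; apply/propext; split.
  exact: U_ideal_subU (sub_Uplus jsU).
move=> CI; split=> [|S [x0 [jx0 Gx0]] SC x jx]; first exact: CI.1.
by rewrite -(is_join_unique jx0 jx); exact: Gx0 C CI SC.
Qed.

Lemma Gamma_Uplus U : join_spec U -> Gamma (Uplus U) = Gamma U.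
Proof. by move=> jsU; rewrite /Gamma U_ideal_Uplus. Qed.

Lemma Uplus_subU U V : U `<=` V -> Uplus U `<=` Uplus V.
Proof.
by move=> UV S [x [jx Gx]]; exists x; split=> //; exact: Gamma_subU Gx.
Qed.

Lemma Uplus_idem U : join_spec U -> Uplus (Uplus U) = Uplus U.
Proof. by move=> jsU; rewrite /Uplus Gamma_Uplus. Qed.

Lemma Uplus_downmeet U S y x : distributive_js U -> U S -> is_join S y ->
  x <= y -> Uplus U (downmeet x S).
Proof.
move=> dU US jy xy; exists x.
by split; [exact: is_join_downmeet dU US jy xy | exact: dU S US y jy x xy].
Qed.

Lemma JF_Uplus U : JF U -> JF (Uplus U).
Proof.
move=> [jsU fgU]; split; last by rewrite /frame_generating U_ideal_Uplus.
split=> [S [x [jx _]]|p]; first by exists x.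
exact: sub_Uplus jsU _ (jsU.2 p).
Qed.

Lemma B_P_sub U : join_spec U -> B_P `<=` U.
Proof. by move=> [_ singletons] _ [p ->]; exact: singletons. Qed.

Lemma JF_B_P : JF (@B_P _ P).
Proof.
split; first by split=> [_ [p ->]|p]; [exists p; exact: is_join1 | exists p].
apply/frame_generatingP => _ [p ->] y jy x xy; apply: sub_Gamma.
split; first exact: lexx.
by exists p => //; apply: le_trans xy _; apply: jy.2 => _ ->.
Qed.

Lemma JF_bigcup (F : set (set (set P))) :
  F `<=` JF -> F !=set0 -> JF (\bigcup_(U in F) U).
Proof.
move=> FJ [U0 FU0]; split.
  split=> [S [U FU US]|p]; first exact: (FJ U FU).1.1 S US.
  by exists U0 => //; exact: (FJ U0 FU0).1.2.
apply/frame_generatingP => S [U FU US] y jy x xy.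
have dU : distributive_js U by apply/frame_generatingP; exact: (FJ U FU).2.
by apply: Gamma_subU (dU S US y jy x xy) => T UT; exists U.
Qed.

Lemma JFplus_bigcap (F : set (set (set P))) :
  F `<=` JFplus -> F !=set0 -> JFplus (\bigcap_(U in F) U).
Proof.
move=> FJ [U0 FU0]; set V := \bigcap_(U in F) U.
have VU U : F U -> V `<=` U by move=> FU S; apply.
have dU U : F U -> distributive_js U.
  by move=> FU; apply/frame_generatingP; exact: (FJ U FU).1.2.
have UplusU U : F U -> Uplus U = U by move=> FU; rewrite -(FJ U FU).2.
have jsV : join_spec V.
  split=> [S VS|p U FU]; first exact: (FJ U0 FU0).1.1.1 S (VS U0 FU0).
  exact: (FJ U FU).1.1.2.
have dmV S y x : V S -> is_join S y -> x <= y -> V (downmeet x S).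
  move=> VS jy xy U FU; rewrite -(UplusU U FU).
  exact: Uplus_downmeet (dU U FU) (VU U FU S VS) jy xy.
split; last first.
  apply/seteqP; split=> [|S VpS U FU]; first exact: sub_Uplus.
  by rewrite -(UplusU U FU); exact: Uplus_subU (VU U FU) S VpS.
split=> //; apply/frame_generatingP => S VS y jy x xy.
apply: Gamma_join (dmV S y x VS jy xy) _.
exact: is_join_downmeet (dU U0 FU0) (VU U0 FU0 S VS) jy xy.
Qed.

Lemma JF_is_lub (F : set (set (set P))) : F `<=` JF -> F !=set0 ->
  is_lub_in subset JF F (\bigcup_(U in F) U).
Proof. by move=> FJ F0; apply: is_lub_in_bigcup; exact: JF_bigcup. Qed.

Lemma JFplus_is_glb (F : set (set (set P))) : F `<=` JFplus -> F !=set0 ->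
  is_glb_in subset JFplus F (\bigcap_(U in F) U).
Proof. by move=> FJ F0; apply: is_glb_in_bigcap; exact: JFplus_bigcap. Qed.

Lemma JF_is_bot : is_bot_in subset JF (@B_P _ P).
Proof. by split=> [|U JU]; [exact: JF_B_P | exact: B_P_sub JU.1]. Qed.

Lemma JF_is_top : is_top_in subset JF (\bigcup_(U in @JF _ P) U).
Proof.
split=> [|U JU S US]; last by exists U.
by apply: JF_bigcup => //; exists B_P; exact: JF_B_P.
Qed.

Lemma JFplus_is_top : is_top_in subset JFplus (\bigcup_(U in @JF _ P) U).
Proof.
have [JW WJ] := JF_is_top; split=> [|U [JU _]]; last exact: WJ.
split=> //; apply/seteqP; split; first exact: sub_Uplus JW.1.
exact: WJ (JF_Uplus JW).
Qed.

Lemma JFplus_is_bot : is_bot_in subset JFplus (@B_P_plus _ P).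
Proof.
split=> [|U [JU maxU]]; last by rewrite maxU; exact: Uplus_subU (B_P_sub JU.1).
split; first exact: JF_Uplus JF_B_P.
by rewrite /maximal_js /B_P_plus Uplus_idem //; exact: JF_B_P.1.
Qed.

Lemma JF_complete_lattice : complete_lattice_in subset (@JF _ P).
Proof.
apply: complete_lattice_in_bot JF_is_bot _ => F FJ F0.
by exists (\bigcup_(U in F) U); exact: JF_is_lub.
Qed.

Lemma JFplus_complete_lattice : complete_lattice_in subset (@JFplus _ P).
Proof.
apply: complete_lattice_in_top JFplus_is_top _ => F FJ F0.
by exists (\bigcap_(U in F) U); exact: JFplus_is_glb.
Qed.

End JoinSpecifications.

Theorem theorem5p5 (disp : Order.disp_t) (P : porderType disp) :
  let incl := fun U V : set (set P) => U `<=` V in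
  (* (1) *)
  (complete_lattice_in incl (@JF _ P) /\
   (forall F : set (set (set P)), F `<=` JF -> F !=set0 ->
      is_lub_in incl JF F (\bigcup_(U in F) U)) /\
   is_top_in incl JF (\bigcup_(U in (@JF _ P)) U) /\
   is_bot_in incl JF (@B_P _ P)) /\
  (* (2) *)
  (complete_lattice_in incl (@JFplus _ P) /\
   (forall F : set (set (set P)), F `<=` JFplus -> F !=set0 ->
      is_glb_in incl JFplus F (\bigcap_(U in F) U)) /\
   is_top_in incl JFplus (\bigcup_(U in (@JF _ P)) U) /\
   is_bot_in incl JFplus (@B_P_plus _ P)).
Proof.
move=> incl; split.
  split; first exact: JF_complete_lattice.
  by split; [exact: JF_is_lub | split; [exact: JF_is_top | exact: JF_is_bot]].
split; first exact: JFplus_complete_lattice.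
split; first exact: JFplus_is_glb.
by split; [exact: JFplus_is_top | exact: JFplus_is_bot].
Qed.
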